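(* Let $D$ be a finite domain and let $\mathcal F$ be a family of functions of the form $f:D^L\to D$. Then there exists a finite family $\Lambda$ of promise relations over $D$ in which every member has the form $(P,P)$ (a CSP) such that $\mathcal F=\operatorname{poly}(\Lambda)$ if and only if $\mathcal F$ is projection-closed, finitizable, a clone, and contains the identity function $\operatorname{id}_D$.
   Context: A promise relation over $D$ is a pair $(P,Q)$ with $P\subseteq Q\subseteq D^k$. $f:D^L\to D$ is a weak polymorphism of $(P,Q)$ if for all $x^{(1)},\dots,x^{(L)}\in P$, $(f(x^{(1)}_1,\dots,x^{(L)}_1),\dots,f(x^{(1)}_k,\dots,x^{(L)}_k))\in Q$; $\operatorname{poly}(\Lambda)$ is the set of functions that are weak polymorphisms of every member of $\Lambda$. For $f:D^L\to D$ and $\pi:[L]\to[R]$, $f^\pi:D^R\to D$ is $f^\pi(y)=f(x)$ with $x_i=y_{\pi(i)}$. $\mathcal F$ is projection-closed if $f^\pi\in\mathcal F$ for all $f\in\mathcal F$ of arity $L$, all $R$, and all $\pi:[L]\to[R]$; finitizable if there is $R\in\mathbb N$ such that for every $L$ and $f:D^L\to D$, $f\in\mathcal F$ iff $f^\pi\in\mathcal F$ for all $\pi:[L]\to[R]$. $\mathcal F$ is a clone if for all $f\in\mathcal F$ of arity $L_1$ and all $g_1,\dots,g_{L_1}\in\mathcal F$ of arity $L_2$, the function $h:D^{L_1L_2}\to D$, $h(x^{(1)},\dots,x^{(L_1)})=f(g_1(x^{(1)}),\dots,g_{L_1}(x^{(L_1)}))$ (with $x^{(j)}\in D^{L_2}$),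 is in $\mathcal F$. $\operatorname{id}_D(x)=x$. *)

From HB Require Import structures.
From mathcomp Require Import all_boot.
From mathcomp Require Import zify.

Set Implicit Arguments.
Unset Strict Implicit.
Unset Printing Implicit Defensive.

(* A function f : D^L -> D, stored as a finite function (so equality is
   extensional). Coordinates of D^L are indexed by 'I_L. *)
Definition fn (D : finType) (L : nat) := {ffun {ffun 'I_L -> D} -> D}.

Record prel (D : finType) := Prel {
  prel_ar : nat;
  prel_P : {set {ffun 'I_prel_ar -> D}};
  prel_Q : {set {ffun 'I_prel_ar -> D}};
  prel_sub : prel_P \subset prel_Q }.

Definition is_csp (D : finType) (r : prel D) : Prop := prel_P r = prel_Q r.

Definition weak_poly (D : finType) (L : nat) (f : fn D L) (r : prel D) : Prop :=
  forall x : 'I_L -> {ffun 'I_(prel_ar r) -> D},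
    (forall l, x l \in prel_P r) ->
    [ffun c => f [ffun l => x l c]] \in prel_Q r.

Definition poly (D : finType) (Lam : seq (prel D)) (L : nat) (f : fn D L) : Prop :=
  forall r, List.In r Lam -> weak_poly f r.

Definition minor (D : finType) (L R : nat) (f : fn D L) (pi : 'I_L -> 'I_R)
  : fn D R := [ffun y : {ffun 'I_R -> D} => f [ffun i => y (pi i)]].

Definition fnfamily (D : finType) := forall L : nat, fn D L -> Prop.

Definition projection_closed (D : finType) (F : fnfamily D) : Prop :=
  forall L R (f : fn D L) (pi : 'I_L -> 'I_R),
    0 < L -> F L f -> F R (minor f pi).

Definition finitizable (D : finType) (F : fnfamily D) : Prop :=
  exists R : nat, forall L (f : fn D L), 0 < L ->
    (F L f <-> forall pi : 'I_L -> 'I_R, F R (minor f pi)).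

Lemma block_index_subproof (L1 L2 : nat) (j : 'I_L1) (i : 'I_L2) :
  j * L2 + i < L1 * L2.
Proof. have := ltn_ord j; have := ltn_ord i; nia. Qed.

Definition block_index (L1 L2 : nat) (j : 'I_L1) (i : 'I_L2) : 'I_(L1 * L2) :=
  Ordinal (block_index_subproof j i).

Definition clone_comp (D : finType) (L1 L2 : nat) (f : fn D L1)
  (g : 'I_L1 -> fn D L2) : fn D (L1 * L2) :=
  [ffun x : {ffun 'I_(L1 * L2) -> D} =>
     f [ffun j => g j [ffun i => x (block_index j i)]]].

Definition is_clone (D : finType) (F : fnfamily D) : Prop :=
  forall L1 L2 (f : fn D L1) (g : 'I_L1 -> fn D L2),
    0 < L1 -> 0 < L2 -> F L1 f -> (forall j, F L2 (g j)) ->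
    F (L1 * L2) (clone_comp f g).

Definition idD (D : finType) : fn D 1 := [ffun x : {ffun 'I_1 -> D} => x ord0].

Definition fam_eq (D : finType) (F G : fnfamily D) : Prop :=
  forall L (f : fn D L), 0 < L -> (F L f <-> G L f).

From HB Require Import structures.
From mathcomp Require Import all_boot boolp.

Set Implicit Arguments.
Unset Strict Implicit.
Unset Printing Implicit Defensive.

(* Polymorphisms of CSPs are closed under minors and composition and contain
   the identity; a polymorphism of arity L is determined by its minors of arity
   R = max |D^k| (k ranging over the arities of the relations), because L
   tuples of a relation of arity k take at most |D^k| distinct values.
   Conversely, for a finitizable clone F with bound R, take the single relation
   of arity |D^R| whose tuples are the truth tables of the R-ary members of F.
   Applying a member of F coordinatewise to such tables gives a superposition
   of members of F, hence a table of a member of F; and applying any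
   polymorphism f to the tables of the projections y |-> y_(pi l) gives the
   table of the minor f^pi, which therefore lies in F. *)

Definition apply_cw (D I : finType) L (f : fn D L) (x : 'I_L -> {ffun I -> D})
  : {ffun I -> D} := [ffun c => f [ffun l => x l c]].

Lemma ord_fun_gt0 L R (pi : 'I_L -> 'I_R) : 0 < L -> 0 < R.
Proof. by move=> L0; case: (pi (Ordinal L0)) => i; apply: leq_ltn_trans. Qed.

Lemma factor_through_ord (T : finType) L R (x : 'I_L -> T) :
  0 < L -> #|T| <= R ->
  exists pi : 'I_L -> 'I_R,
    exists2 y : 'I_R -> T,
      (forall j, exists l, y j = x l) & forall l, y (pi l) = x l.
Proof.
move=> L0 leTR; pose pi l := widen_ord leTR (enum_rank (x l)).
exists pi, (fun j => if [pick l | pi l == j] is Some l then x l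
                     else x (Ordinal L0)).
  by move=> j; case: pickP => [l _|_]; eexists.
move=> l; case: pickP => [l' /eqP /(congr1 val) /= e|/(_ l)]; last by rewrite eqxx.
by apply/enum_rank_inj/val_inj.
Qed.

Section ApplyCoordinatewise.
Variables D I : finType.

Lemma eq_apply_cw L (f : fn D L) (x y : 'I_L -> {ffun I -> D}) :
  x =1 y -> apply_cw f x = apply_cw f y.
Proof.
move=> xy; apply/ffunP => c; rewrite !ffunE; congr (f _).
by apply/ffunP => l; rewrite !ffunE xy.
Qed.

Lemma apply_cw_minor L R (f : fn D L) (pi : 'I_L -> 'I_R)
    (y : 'I_R -> {ffun I -> D}) :
  apply_cw (minor f pi) y = apply_cw f (y \o pi).
Proof.
by apply/ffunP => c; rewrite !ffunE; congr (f _); apply/ffunP => l; rewrite !ffunE.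
Qed.

Lemma apply_cw_clone_comp L1 L2 (f : fn D L1) (g : 'I_L1 -> fn D L2)
    (x : 'I_(L1 * L2) -> {ffun I -> D}) :
  apply_cw (clone_comp f g) x =
  apply_cw f (fun j => apply_cw (g j) (fun i => x (block_index j i))).
Proof.
apply/ffunP => c; rewrite !ffunE; congr (f _); apply/ffunP => j; rewrite !ffunE.
by congr (g j _); apply/ffunP => i; rewrite !ffunE.
Qed.

Lemma apply_cw_idD (x : 'I_1 -> {ffun I -> D}) : apply_cw (idD D) x = x ord0.
Proof. by apply/ffunP => c; rewrite !ffunE. Qed.

Lemma apply_cw_reindex (J : finType) (h : J -> I) L (f : fn D L)
    (x : 'I_L -> {ffun I -> D}) :
  apply_cw f (fun l => [ffun j => x l (h j)]) = [ffun j => apply_cw f x (h j)].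
Proof.
by apply/ffunP => j; rewrite !ffunE; congr (f _); apply/ffunP => l; rewrite !ffunE.
Qed.

End ApplyCoordinatewise.

Definition finitizable_clone (D : finType) (F : fnfamily D) : Prop :=
  [/\ projection_closed F, finitizable F, is_clone F & F 1 (idD D)].

Lemma finitizable_clone_fam_eq (D : finType) (F G : fnfamily D) :
  fam_eq F G -> finitizable_clone G -> finitizable_clone F.
Proof.
move=> FG [pcG [R finG] clG idG]; split.
- move=> L R' f pi L0 /(FG _ _ L0) Gf.
  by apply/(FG _ _ (ord_fun_gt0 pi L0)); apply: pcG.
- exists R => L f L0; rewrite (FG _ _ L0) finG //.
  by split=> H pi; apply/(FG _ _ (ord_fun_gt0 pi L0)); apply: H.
- move=> L1 L2 f g L10 L20 /(FG _ _ L10) Gf Fg.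
  have L0 : 0 < L1 * L2 by rewrite muln_gt0 L10.
  by apply/(FG _ _ L0); apply: clG => // j; apply/(FG _ _ L20).
- exact/(FG 1 (idD D) isT).
Qed.

Lemma finitizable_gt0 (D : finType) (F : fnfamily D) : finitizable F ->
  exists2 R, 0 < R &
    forall L (f : fn D L), 0 < L ->
      (F L f <-> forall pi : 'I_L -> 'I_R, F R (minor f pi)).
Proof.
case=> [[|R] fin]; last by exists R.+1.
have all_F L (f : fn D L) : 0 < L -> F L f.
  by move=> L0; apply/fin => // pi; case: (pi (Ordinal L0)).
by exists 1 => // L f L0; split=> _ => [pi|]; apply: all_F.
Qed.

Lemma apply_cw_clone_closed (D : finType) (F : fnfamily D) R L (f : fn D L)
    (g : 'I_L -> fn D R) :
  projection_closed F -> is_clone F -> 0 < L -> 0 < R ->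
  F L f -> (forall l, F R (g l)) -> F R (apply_cw f g).
Proof.
move=> pc cl L0 R0 Ff Fg.
have -> : apply_cw f g = minor (clone_comp f g) (fun k => Ordinal (ltn_pmod k R0)).
  apply/ffunP => y; rewrite !ffunE; congr (f _); apply/ffunP => j; rewrite !ffunE.
  congr (g j _); apply/ffunP => i; rewrite !ffunE.
  by congr (y _); apply: val_inj; rewrite /= modnMDl modn_small.
by apply: pc; [rewrite muln_gt0 L0 | apply: cl].
Qed.

Section CspPolymorphisms.
Variables (D : finType) (Lam : seq (prel D)).
Hypothesis Lam_csp : forall r, List.In r Lam -> is_csp r.

Lemma poly_minor L R (f : fn D L) (pi : 'I_L -> 'I_R) :
  poly Lam f -> poly Lam (minor f pi).
Proof.
move=> Hf r Hr y Hy; rewrite -/(apply_cw _ y) apply_cw_minor.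
exact: Hf r Hr (y \o pi) (fun l => Hy (pi l)).
Qed.

Lemma poly_clone_comp L1 L2 (f : fn D L1) (g : 'I_L1 -> fn D L2) :
  poly Lam f -> (forall j, poly Lam (g j)) -> poly Lam (clone_comp f g).
Proof.
move=> Hf Hg r Hr x Hx; rewrite -/(apply_cw _ x) apply_cw_clone_comp.
apply: (Hf r Hr) => j; rewrite (Lam_csp Hr).
exact: Hg j r Hr (fun i => x (block_index j i)) (fun i => Hx _).
Qed.

Lemma poly_idD : poly Lam (idD D).
Proof. by move=> r Hr x Hx; rewrite -/(apply_cw _ x) apply_cw_idD -(Lam_csp Hr). Qed.

Definition tuple_bound := \max_(r <- Lam) #|{ffun 'I_(prel_ar r) -> D}|.

Lemma leq_tuple_bound r :
  List.In r Lam -> #|{ffun 'I_(prel_ar r) -> D}| <= tuple_bound.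
Proof.
rewrite /tuple_bound; elim: Lam => [|r' s IH] //= [->|/IH le_r];
  rewrite big_cons ?leq_maxl //.
exact: leq_trans le_r (leq_maxr _ _).
Qed.

Lemma poly_minorsP R L (f : fn D L) : 0 < L -> tuple_bound <= R ->
  poly Lam f <-> forall pi : 'I_L -> 'I_R, poly Lam (minor f pi).
Proof.
move=> L0 le_bound_R; split=> [Hf pi|Hminors r Hr x Hx]; first exact: poly_minor.
have [pi [y y_x yE]] :=
  factor_through_ord x L0 (leq_trans (leq_tuple_bound Hr) le_bound_R).
rewrite -/(apply_cw _ x) (eq_apply_cw f (fun l => esym (yE l))) -apply_cw_minor.
by apply: (Hminors pi r Hr y) => j; have [l ->] := y_x j.
Qed.

Lemma poly_finitizable_clone : finitizable_clone (poly Lam).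
Proof.
split.
- by move=> L R f pi _; apply: poly_minor.
- by exists tuple_bound => L f L0; apply: poly_minorsP.
- by move=> L1 L2 f g _ _; apply: poly_clone_comp.
- exact: poly_idD.
Qed.

End CspPolymorphisms.

Section TableCsp.
Variables (D : finType) (F : fnfamily D) (R : nat).
Arguments F : clear implicits.

Definition to_table (g : fn D R) : {ffun 'I_#|{ffun 'I_R -> D}| -> D} :=
  [ffun c => g (enum_val c)].

Definition of_table (t : {ffun 'I_#|{ffun 'I_R -> D}| -> D}) : fn D R :=
  [ffun y => t (enum_rank y)].

Lemma to_tableK : cancel to_table of_table.
Proof. by move=> g; apply/ffunP => y; rewrite !ffunE enum_rankK. Qed.

Lemma of_table_apply_cw L (f : fn D L) x :
  of_table (apply_cw f x) = apply_cw f (fun l => of_table (x l)).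
Proof. by rewrite apply_cw_reindex. Qed.

Lemma apply_cw_proj L (f : fn D L) (pi : 'I_L -> 'I_R) :
  apply_cw f (fun l => minor (idD D) (fun _ => pi l)) = minor f pi.
Proof.
by apply/ffunP => y; rewrite !ffunE; congr (f _); apply/ffunP => l; rewrite !ffunE.
Qed.

Definition table_set := [set t | `[< F R (of_table t) >]].

Definition table_csp : prel D := Prel (subxx table_set).

Lemma in_table_csp t : t \in prel_P table_csp <-> F R (of_table t).
Proof. by rewrite inE asboolE. Qed.

Hypotheses (F_pc : projection_closed F) (F_clone : is_clone F).
Hypotheses (F_id : F 1 (idD D)) (R_gt0 : 0 < R).
Hypothesis F_minorsP : forall L (f : fn D L), 0 < L ->
  (F L f <-> forall pi : 'I_L -> 'I_R, F R (minor f pi)).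

Lemma poly_table_csp : fam_eq F (poly [:: table_csp]).
Proof.
move=> L f L0; split=> [Ff _ [<-|[]] x Hx | Hf].
  rewrite -/(apply_cw f x) in_table_csp of_table_apply_cw.
  by apply: apply_cw_clone_closed => // l; apply/in_table_csp.
apply/F_minorsP => // pi; rewrite -apply_cw_proj.
pose x l := to_table (minor (idD D) (fun _ : 'I_1 => pi l)).
have /in_table_csp : apply_cw f x \in prel_P table_csp.
  apply: (Hf _ (or_introl erefl) x) => l; apply/in_table_csp.
  by rewrite to_tableK; apply: F_pc.
by rewrite of_table_apply_cw (eq_apply_cw f (fun l => to_tableK _)).
Qed.

End TableCsp.

Theorem lemmaE4 (D : finType) (F : fnfamily D) :
  (exists Lam : seq (prel D),
     (forall r, List.In r Lam -> is_csp r) /\ fam_eq F (@poly D Lam))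
  <->
  [/\ projection_closed F, finitizable F, is_clone F & F 1 (idD D)].
Proof.
split=> [[Lam [Lam_csp FE]] | [F_pc F_fin F_clone F_id]].
  exact: finitizable_clone_fam_eq FE (poly_finitizable_clone Lam_csp).
have [R R_gt0 F_minorsP] := finitizable_gt0 F_fin.
exists [:: table_csp F R]; split; first by move=> r [<-|[]].
exact: poly_table_csp F_pc F_clone F_id R_gt0 F_minorsP.
Qed.
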